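(* Let $\mathfrak{e}_1$, $\mathfrak{e}_2$, $\mathfrak{e}_3$ be the consecutive positively oriented edges of an elementary triangle of $\mathcal{T}\mathcal{L}$. Then the zero curvature condition \[ L(\mathfrak{e}_3,\lambda)L(\mathfrak{e}_2,\lambda)L(\mathfrak{e}_1,\lambda)=I \] is equivalent to the following set of equations: \begin{equation} f_1+f_2+f_3=0,\qquad g_1+g_2+g_3=0, \end{equation} and \begin{equation} f_1g_1=f_3g_2\quad\Leftrightarrow\quad f_2g_2=f_1g_3 \quad\Leftrightarrow\quad f_3g_3=f_2g_1, \end{equation} with the understanding that $h_k=(f_kg_k)^{-1}$, $k=1,2,3$.
   Context: $\mathcal{T}\mathcal{L}$ is the regular triangular lattice with vertices $k+\ell\omega+m\omega^2$ ($k,\ell,m\in\mathbb Z$, $\omega=e^{2\pi i/3}$) and edges between vertices at distance 1. Edges of the types $(\mathfrak{z},\mathfrak{z}+1)$, $(\mathfrak{z},\mathfrak{z}+\omega)$, $(\mathfrak{z},\mathfrak{z}+\omega^2)$ are declared positively oriented; with this, each elementary triangle (e.g. $(\mathfrak{z},\mathfrak{z}+\omega,\mathfrak{z}-1)$ or $(\mathfrak{z},\mathfrak{z}+\omega^2,\mathfrak{z}-1)$) has three consecutive positively oriented edges. To every positively oriented edge $\mathfrak{e}$ is attached a triple $(f,g,h)\in\mathbb C^3$ with $fgh=1$ and the matrix \[ L(\mathfrak{e},\lambda)=(1+\lambda^3)^{-1/3}\begin{pmatrix} 1 & \lambda f & 0 \\ 0 & 1 & \lambda g \\ \lambda h & 0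 & 1\end{pmatrix}, \] an element of the twisted loop group $\{L:\mathbb C\to SL(3,\mathbb C)\,|\,L(\omega\lambda)=\Omega L(\lambda)\Omega^{-1}\}$, $\Omega=\mathrm{diag}(1,\omega,\omega^2)$. Here $(f_k,g_k,h_k)$ is the triple attached to $\mathfrak{e}_k$. *)

From HB Require Import structures.
From mathcomp Require Import all_boot all_order all_algebra.
Set Implicit Arguments. Unset Strict Implicit. Unset Printing Implicit Defensive.
Import Order.TTheory GRing.Theory Num.Theory.
Local Open Scope ring_scope.

(* The field C is any numeric algebraically closed field (e.g. the complex
   numbers); it carries the cube root n.-root used for (1+l^3)^(-1/3). *)

Definition Lraw (C : numClosedFieldType) (f g h l : C) : 'M[C]_3 :=
  \matrix_(i < 3, j < 3)
    match nat_of_ord i, nat_of_ord j with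
    | 0%N, 1%N => l * f
    | 1%N, 2%N => l * g
    | 2%N, 0%N => l * h
    | a, b => if (a == b)%N then 1 else 0
    end.

Definition Lmat (C : numClosedFieldType) (f g h l : C) : 'M[C]_3 :=
  (3.-root (1 + l ^+ 3))^-1 *: Lraw f g h l.

Definition zero_curvature (C : numClosedFieldType)
    (f1 g1 h1 f2 g2 h2 f3 g3 h3 : C) : Prop :=
  forall l : C, 1 + l ^+ 3 != 0 ->
    Lmat f3 g3 h3 l *m Lmat f2 g2 h2 l *m Lmat f1 g1 h1 l = 1%:M.

From mathcomp Require Import all_boot all_order all_algebra.
From mathcomp Require Import ring.
Import GRing.Theory Num.Theory.
Set Implicit Arguments. Unset Strict Implicit.
Local Open Scope ring_scope.

(* Write L(e, l) = (1 + l^3)^(-1/3) (I + l A) with A the cyclic shift weighted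
   by (f, g, h).  The entries of (I + l A3)(I + l A2)(I + l A1) are
   1 + l^3 f3 g2 h1 (and its cyclic analogues) on the diagonal, l times the sums
   of the f's, g's, h's, and l^2 times quadratic expressions; they sit in distinct
   positions, so already at l = 1 zero curvature forces f1 + f2 + f3 = 0,
   g1 + g2 + g3 = 0 and f3 g2 h1 = 1, i.e. f1 g1 = f3 g2.  Conversely these three
   equations express f1, f3, g3 rationally in f2, g1, g2, and every entry becomes
   a rational identity.  The other two forms of the cross condition follow by
   cyclic relabelling of the edges, since L3 L2 L1 = I iff L1 L3 L2 = I. *)

Lemma big_ord3 (R : nmodType) (F : 'I_3 -> R) :
  \sum_(i < 3) F i = F ord0 + F (inord 1) + F (inord 2).
Proof.
rewrite !big_ord_recr big_ord0 /= add0r.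
by congr (_ + _ + _); congr F; apply: val_inj; rewrite /= ?inordK.
Qed.

Definition Lraw_prod (C : numClosedFieldType) (f1 g1 h1 f2 g2 h2 f3 g3 h3 l : C)
    : 'M[C]_3 :=
  \matrix_(i < 3, j < 3)
    match nat_of_ord i, nat_of_ord j with
    | 0%N, 0%N => 1 + l ^+ 3 * (f3 * g2 * h1)
    | 0%N, 1%N => l * (f1 + f2 + f3)
    | 0%N, _ => l ^+ 2 * (f3 * g2 + f3 * g1 + f2 * g1)
    | 1%N, 0%N => l ^+ 2 * (g3 * h2 + g3 * h1 + g2 * h1)
    | 1%N, 1%N => 1 + l ^+ 3 * (g3 * h2 * f1)
    | 1%N, _ => l * (g1 + g2 + g3)
    | _, 0%N => l * (h1 + h2 + h3)
    | _, 1%N => l ^+ 2 * (h3 * f2 + h3 * f1 + h2 * f1)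
    | _, _ => 1 + l ^+ 3 * (h3 * f2 * g1)
    end.

Lemma mulmx_Lraw3 (C : numClosedFieldType) (f1 g1 h1 f2 g2 h2 f3 g3 h3 l : C) :
  Lraw f3 g3 h3 l *m Lraw f2 g2 h2 l *m Lraw f1 g1 h1 l =
  Lraw_prod f1 g1 h1 f2 g2 h2 f3 g3 h3 l.
Proof.
apply/matrixP => i j; rewrite !mxE !big_ord3 !mxE !big_ord3 !mxE /= !inordK //.
by case: i => [[|[|[|?]]] ?] //=; case: j => [[|[|[|?]]] ?] //=; ring.
Qed.

Lemma mulmx_Lmat3 (C : numClosedFieldType) (f1 g1 h1 f2 g2 h2 f3 g3 h3 l : C) :
  Lmat f3 g3 h3 l *m Lmat f2 g2 h2 l *m Lmat f1 g1 h1 l =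
  (1 + l ^+ 3)^-1 *: Lraw_prod f1 g1 h1 f2 g2 h2 f3 g3 h3 l.
Proof.
rewrite /Lmat -!scalemxAl -!scalemxAr !scalerA -scalemxAl scalerA mulmx_Lraw3.
congr (_ *: _); rewrite -[in RHS](@rootCK _ 3 isT (1 + l ^+ 3)).
by rewrite -exprVn; ring.
Qed.

Lemma zero_curvatureE (C : numClosedFieldType) (f1 g1 h1 f2 g2 h2 f3 g3 h3 : C) :
  zero_curvature f1 g1 h1 f2 g2 h2 f3 g3 h3 <->
  forall l : C, 1 + l ^+ 3 != 0 ->
    Lraw_prod f1 g1 h1 f2 g2 h2 f3 g3 h3 l = (1 + l ^+ 3)%:M.
Proof.
have scale_inv_eq1 (x : C) (A : 'M[C]_3) :
    x != 0 -> x^-1 *: A = 1%:M <-> A = x%:M.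
  move=> x_neq0; rewrite -[x%:M]scalemx1.
  by split=> [<-|->]; rewrite scalerA ?mulfV ?mulVf ?scale1r.
by split=> zc l l_reg; have := zc l l_reg; rewrite mulmx_Lmat3 scale_inv_eq1.
Qed.

Lemma mulmx1_rot (R : comUnitRingType) n (A B D : 'M[R]_n) :
  A *m B *m D = 1%:M -> B *m D *m A = 1%:M.
Proof. by rewrite -mulmxA => /mulmx1C. Qed.

Lemma zero_curvature_rot (C : numClosedFieldType) (f1 g1 h1 f2 g2 h2 f3 g3 h3 : C) :
  zero_curvature f1 g1 h1 f2 g2 h2 f3 g3 h3 <->
  zero_curvature f2 g2 h2 f3 g3 h3 f1 g1 h1.
Proof.
by split=> zc l /zc; [move/mulmx1_rot/mulmx1_rot | move/mulmx1_rot].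
Qed.

Lemma mulr3_eq1_factors (F : fieldType) (a b c : F) :
  a * b * c = 1 -> [/\ a != 0, b != 0 & c = (a * b)^-1].
Proof.
move=> abc_eq1; rewrite (esym (mulr1_eq abc_eq1)).
have : a * b \is a GRing.unit by apply/unitrPr; exists c.
by rewrite unitfE mulf_eq0 negb_or => /andP[].
Qed.

Lemma zero_curvature_necessary (C : numClosedFieldType)
    (f1 g1 h1 f2 g2 h2 f3 g3 h3 : C) :
  f1 * g1 * h1 = 1 -> zero_curvature f1 g1 h1 f2 g2 h2 f3 g3 h3 ->
  [/\ f1 + f2 + f3 = 0, g1 + g2 + g3 = 0 & f1 * g1 = f3 * g2].
Proof.
rewrite zero_curvatureE => fgh1 zc.
have two_neq0 : 1 + 1 ^+ 3 != 0 :> C by rewrite expr1n -[1 + 1 : C]/2%:R pnatr_eq0.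
have /matrixP zc1 := zc 1 two_neq0.
have := zc1 ord0 (inord 1); have := zc1 (inord 1) (inord 2); have := zc1 ord0 ord0.
rewrite !mxE -!val_eqE /= !inordK //= expr1n !mul1r => /addrI f3g2h1 g_sum f_sum.
split=> //.
have : f1 * g1 * (f3 * g2 * h1) = f3 * g2 * (f1 * g1 * h1) by ring.
by rewrite f3g2h1 fgh1 !mulr1.
Qed.

Lemma zero_curvature_sufficient (C : numClosedFieldType)
    (f1 g1 h1 f2 g2 h2 f3 g3 h3 : C) :
  f1 * g1 * h1 = 1 -> f2 * g2 * h2 = 1 -> f3 * g3 * h3 = 1 ->
  f1 + f2 + f3 = 0 -> g1 + g2 + g3 = 0 -> f1 * g1 = f3 * g2 ->
  zero_curvature f1 g1 h1 f2 g2 h2 f3 g3 h3.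
Proof.
move=> fgh1 fgh2 fgh3 f_sum g_sum cross; apply/zero_curvatureE => l l_reg.
have [_ g1_neq0 ->] := mulr3_eq1_factors fgh1.
have [f2_neq0 g2_neq0 ->] := mulr3_eq1_factors fgh2.
have [_ g3_neq0 ->] := mulr3_eq1_factors fgh3.
have g3E : g3 = - (g1 + g2) by apply/eqP; rewrite -addr_eq0 addrC g_sum.
have g12_neq0 : g1 + g2 != 0 by rewrite -oppr_eq0 -g3E.
have f3E : f3 = - (f1 + f2) by apply/eqP; rewrite -addr_eq0 addrC f_sum.
have f1E : f1 = - (f2 * g2) / (g1 + g2).
  by apply: (mulIf g12_neq0); rewrite mulfVK // mulrDr cross f3E; ring.
have {}f3E : f3 = - (f2 * g1) / (g1 + g2) by rewrite f3E f1E; field.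
rewrite f1E f3E g3E; apply/matrixP => i j; rewrite !mxE.
case: i => [[|[|[|?]]] ?] //=; case: j => [[|[|[|?]]] ?] //=.
all: by field; rewrite ?l_reg ?g1_neq0 ?g2_neq0 ?f2_neq0 ?g12_neq0.
Qed.

Lemma zero_curvature_iff (C : numClosedFieldType) (f1 g1 h1 f2 g2 h2 f3 g3 h3 : C) :
  f1 * g1 * h1 = 1 -> f2 * g2 * h2 = 1 -> f3 * g3 * h3 = 1 ->
  zero_curvature f1 g1 h1 f2 g2 h2 f3 g3 h3 <->
  [/\ f1 + f2 + f3 = 0, g1 + g2 + g3 = 0 & f1 * g1 = f3 * g2].
Proof.
move=> fgh1 fgh2 fgh3; split; first exact: zero_curvature_necessary.
by case; apply: zero_curvature_sufficient.
Qed.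

Theorem theorem7 (C : numClosedFieldType) (f1 g1 h1 f2 g2 h2 f3 g3 h3 : C) :
  f1 * g1 * h1 = 1 -> f2 * g2 * h2 = 1 -> f3 * g3 * h3 = 1 ->
  [/\ zero_curvature f1 g1 h1 f2 g2 h2 f3 g3 h3 <->
        [/\ f1 + f2 + f3 = 0, g1 + g2 + g3 = 0 & f1 * g1 = f3 * g2],
      zero_curvature f1 g1 h1 f2 g2 h2 f3 g3 h3 <->
        [/\ f1 + f2 + f3 = 0, g1 + g2 + g3 = 0 & f2 * g2 = f1 * g3] &
      zero_curvature f1 g1 h1 f2 g2 h2 f3 g3 h3 <->
        [/\ f1 + f2 + f3 = 0, g1 + g2 + g3 = 0 & f3 * g3 = f2 * g1]].
Proof.
move=> fgh1 fgh2 fgh3.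
have sum_rot (x y z : C) : (y + z + x = 0) = (x + y + z = 0) by rewrite addrC addrA.
split; first exact: zero_curvature_iff.
  by rewrite zero_curvature_rot zero_curvature_iff // (sum_rot f1) (sum_rot g1).
by rewrite 2!zero_curvature_rot zero_curvature_iff // -(sum_rot f3) -(sum_rot g3).
Qed.
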